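(* Let $n$ be a non-negative integer and $r\in\mathbb{C}\setminus\mathbb{Z}^{-}$, $r\neq0$. Then \[ \sum_{k=1}^{n}(-1)^{k-1}\frac{\binom{n}{k}}{\binom{k+r}{r}}H_k^2=\frac{1}{n+r}(H_{n+r}-H_r)(rH_r-1)+\frac{n}{(n+r)^2}\left(H_r-\frac1r\right)+\frac{r}{n+r}H_nH_{n+r-1}-r\sum_{k=1}^{n}\frac{H_{n-k+r-1}}{k(n-k+r)}. \] In particular, \[ \sum_{k=1}^{n}(-1)^{k-1}\frac{\binom{n}{k}}{k+1}H_k^2=\frac{1}{2(n+1)}\left(3H_n^{(2)}-H_n^2\right). \]
   Context: $\mathbb{Z}^{-}$ denotes the set of negative integers. For complex $z$ not a negative integer, $H_z=\psi(z+1)+\gamma$ ($\psi$ the digamma function, $\gamma$ Euler's constant); for integers $m\ge0$, $H_m=\sum_{j=1}^m1/j$ and $H_m^{(2)}=\sum_{j=1}^m1/j^2$. Binomial coefficients with complex entries: $\binom{x}{y}=\frac{\Gamma(x+1)}{\Gamma(y+1)\Gamma(x-y+1)}$. *)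

From Stdlib Require Import Reals.
From Coquelicot Require Import Coquelicot.
Open Scope R_scope.

Fixpoint Harm (m : nat) : R :=
  match m with O => 0 | S p => Harm p + / INR (S p) end.
Fixpoint Harm2 (m : nat) : R :=
  match m with O => 0 | S p => Harm2 p + / (INR (S p) ^ 2) end.

(* Complex harmonic number H_z = psi(z+1) + gamma, via the classical series
   psi(z+1) + gamma = sum_{j>=1} z / (j (j + z)), valid for z not in Z^-. *)
Definition Hterm (z : C) (j : nat) : C :=
  Cdiv z (Cmult (RtoC (INR (S j))) (Cplus (RtoC (INR (S j))) z)).
Definition HarmC (z : C) : C :=
  (Series (fun j => Re (Hterm z j)), Series (fun j => Im (Hterm z j))).

(* binom(k + r, r) = Gamma(k+r+1)/(Gamma(r+1) Gamma(k+1)) for k : nat,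
   which equals prod_{j=1}^k (r + j)/j. *)
Fixpoint binomKR (r : C) (k : nat) : C :=
  match k with
  | O => RtoC 1
  | S p => Cmult (binomKR r p) (Cdiv (Cplus r (RtoC (INR (S p)))) (RtoC (INR (S p))))
  end.

Definition not_neg_int (r : C) : Prop := forall m : nat, r <> RtoC (- INR (S m)).

(* Write w_N(k) = (-1)^(k-1) C(N,k) / C(k+r,r) and G_N[a] = sum_{k=1}^N w_N(k) a_k.
   Since (k+1+r) w_N(k+1) = (k-N) w_N(k), summation by parts gives
   (N+r) G_N[a] = G_N[(k+r)(a_k - a_(k-1))] + N a_0, and Pascal's rule gives
   G_(N+1)[b/k] = G_N[b/k] + G_(N+1)[b] / (N+1).  Applied to a = 1, H_k, H_k^2 these
   express the left-hand side through S(N) = sum_{j<=N} 1/(r+j) = H_(N+r) - H_r and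
   sums of S(m)/m.  The functional equation H_(z+1) = H_z + 1/(z+1) turns the
   right-hand side into the same finite sums (the H_r terms cancel), and the remaining
   identity between finite sums is checked by induction on n.  For r = 1 everything
   collapses to H_n and H_n^(2). *)

From Stdlib Require Import Reals Lia Lra.
From Coquelicot Require Import Coquelicot.

Local Open Scope C_scope.

Fixpoint csum (f : nat -> C) (n : nat) : C :=
  match n with O => 0 | S p => csum f p + f (S p) end.

Lemma sum_n_m_csum (f : nat -> C) n : sum_n_m f 1 n = csum f n.
Proof.
  induction n as [|n IH].
  - rewrite sum_n_m_zero; [reflexivity | lia].
  - rewrite sum_n_Sm, IH; [reflexivity | lia].
Qed.

Lemma sum_n_m_RtoC (f : nat -> R) n :
  RtoC (sum_n_m f 1 n) = csum (fun k => RtoC (f k)) n.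
Proof.
  induction n as [|n IH].
  - rewrite sum_n_m_zero; [reflexivity | lia].
  - rewrite sum_n_Sm by lia. simpl csum. rewrite <- IH. apply RtoC_plus.
Qed.

Lemma csum_ext f g n :
  (forall k, (1 <= k <= n)%nat -> f k = g k) -> csum f n = csum g n.
Proof.
  induction n as [|n IH]; intros H; simpl; [reflexivity|].
  rewrite IH, (H (S n)) by (lia || (intros; apply H; lia)). reflexivity.
Qed.

Lemma csum_plus f g n : csum (fun k => f k + g k) n = csum f n + csum g n.
Proof. induction n as [|n IH]; simpl; [ring|]. rewrite IH. ring. Qed.

Lemma csum_minus f g n : csum (fun k => f k - g k) n = csum f n - csum g n.
Proof. induction n as [|n IH]; simpl; [ring|]. rewrite IH. ring. Qed.

Lemma csum_scal c f n : csum (fun k => c * f k) n = c * csum f n.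
Proof. induction n as [|n IH]; simpl; [ring|]. rewrite IH. ring. Qed.

Lemma csum_S f n : csum f (S n) = csum f n + f (S n).
Proof. reflexivity. Qed.

Lemma csum_shift f n : csum f (S n) = f 1%nat + csum (fun k => f (S k)) n.
Proof. induction n as [|n IH]; simpl in *; [ring|]. rewrite IH. ring. Qed.

Lemma csum_reflect g n :
  csum (fun k => g (n - k)%nat) n = csum (fun k => g (k - 1)%nat) n.
Proof.
  revert g; induction n as [|n IH]; intros g; [reflexivity|].
  rewrite (csum_shift (fun k => g (k - 1)%nat)).
  change (csum (fun k => g (S n - k)%nat) (S n))
    with (csum (fun k => g (S n - k)%nat) n + g (S n - S n)%nat).
  rewrite (csum_ext (fun k => g (S n - k)%nat) (fun k => g (S (n - k)))),
    (IH (fun p => g (S p))), Nat.sub_diag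
    by (intros; f_equal; lia).
  rewrite (csum_ext _ (fun k => g (S k - 1)%nat)) by (intros; f_equal; lia).
  simpl. ring.
Qed.

Lemma eq_from_increments (f g : nat -> C) :
  f 0%nat = g 0%nat -> (forall n, f (S n) - f n = g (S n) - g n) ->
  forall n, f n = g n.
Proof.
  intros H0 HS n; induction n as [|n IH]; [exact H0|].
  replace (f (S n)) with (f (S n) - f n + f n) by ring.
  rewrite HS, IH. ring.
Qed.

Lemma Cinv_neq0 (a : C) : a <> 0 -> / a <> 0.
Proof. intros Ha E. apply C1_nz. rewrite <- (Cinv_r a Ha), E. ring. Qed.

Lemma eq_div_of_mult (c x y : C) : c <> 0 -> c * x = y -> x = y / c.
Proof. intros Hc <-. field. exact Hc. Qed.

Definition natC (k : nat) : C := RtoC (INR k).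

Lemma natC_0 : natC 0 = 0.
Proof. reflexivity. Qed.

Lemma natC_S k : natC (S k) = natC k + 1.
Proof. unfold natC. rewrite S_INR. apply RtoC_plus. Qed.

Lemma natC_add m k : natC (m + k) = natC m + natC k.
Proof. unfold natC. rewrite plus_INR. apply RtoC_plus. Qed.

Lemma natC_sub n k : (k <= n)%nat -> natC (n - k) = natC n - natC k.
Proof. intros. unfold natC. rewrite minus_INR by lia. apply RtoC_minus. Qed.

Lemma natC_neq0 k : (1 <= k)%nat -> natC k <> 0.
Proof. intros Hk E. apply RtoC_inj in E. apply (not_0_INR k); [lia | exact E]. Qed.

(* The hypothesis matters: [Binomial.C 0 1 = 1] because of truncated subtraction. *)
Lemma binomial_1 N : (1 <= N)%nat -> Binomial.C N 1 = INR N.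
Proof.
  intros HN. destruct N as [|N]; [lia|].
  rewrite pascal_step3, C_n_0 by lia. simpl INR at 2. rewrite Nat.sub_0_r. field.
Qed.

Definition harmC (k : nat) : C := RtoC (Harm k).

Lemma harmC_0 : harmC 0 = 0.
Proof. reflexivity. Qed.

Lemma harmC_S k : harmC (S k) = harmC k + / natC (S k).
Proof.
  unfold harmC, natC. change (Harm (S k)) with (Harm k + / INR (S k))%R.
  rewrite RtoC_plus, RtoC_inv by (apply not_0_INR; lia). reflexivity.
Qed.

Lemma harmC_pred k : (1 <= k)%nat -> harmC (k - 1) = harmC k - / natC k.
Proof. intros Hk. destruct k as [|k]; [lia|]. rewrite harmC_S, Nat.sub_succ, Nat.sub_0_r. ring. Qed.

Lemma harmC_csum n : harmC n = csum (fun k => 1 / natC k) n.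
Proof. induction n as [|n IH]; [reflexivity|]. rewrite harmC_S, IH. simpl. unfold Cdiv. ring. Qed.

Lemma is_series_telescope (a : nat -> R) :
  is_lim_seq a 0 -> is_series (fun n => a n - a (S n))%R (a O).
Proof.
  intros Ha.
  assert (Hsum : forall N, sum_n (fun n => a n - a (S n))%R N = (a O - a (S N))%R).
  { induction N as [|N IH].
    - apply sum_O.
    - rewrite sum_Sn, IH. unfold plus. simpl. ring. }
  assert (Hlim : is_lim_seq (fun N => a O - a (S N))%R (a O - 0)%R).
  { apply is_lim_seq_minus'; [apply is_lim_seq_const | apply (is_lim_seq_incr_1 a 0), Ha]. }
  rewrite Rminus_0_r in Hlim.
  exact (is_lim_seq_ext _ _ _ (fun N => eq_sym (Hsum N)) Hlim).
Qed.

Lemma Series_plus_telescope (u v : nat -> R) :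
  ex_series u -> is_lim_seq v 0 ->
  Series (fun n => u n + (v n - v (S n)))%R = (Series u + v O)%R.
Proof.
  intros Hu Hv. apply is_series_unique.
  exact (is_series_plus _ _ _ _ (Series_correct _ Hu) (is_series_telescope v Hv)).
Qed.

Lemma is_lim_seq_inv_INR (c : R) (n0 : nat) :
  is_lim_seq (fun j => c / (INR (n0 + j) + 1))%R 0.
Proof.
  assert (H : is_lim_seq (fun j => INR (n0 + j) + 1)%R p_infty).
  { apply (is_lim_seq_le_p_loc INR); [|apply is_lim_seq_INR].
    exists O. intros j _. rewrite plus_INR. pose proof (pos_INR n0). lra. }
  apply is_lim_seq_inv in H; [|discriminate].
  apply (is_lim_seq_scal_l _ c) in H. simpl in H.
  rewrite Rmult_0_r in H. exact H.
Qed.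

(* For [j >= 2 |z|] we have [|j + 1 + z| >= (j + 2) / 2], whence a telescoping majorant. *)
Lemma Hterm_bound (z : C) (j : nat) : (2 * Cmod z <= INR j)%R ->
  (Cmod (Hterm z j) <= 4 * Cmod z * (/ (INR j + 1) - / (INR (S j) + 1)))%R.
Proof.
  intros Hj. unfold Hterm. rewrite S_INR.
  set (a := (INR j + 1)%R) in *. set (m := Cmod z) in *.
  assert (Ha : (1 <= a)%R) by (pose proof (pos_INR j); unfold a; lra).
  assert (Hm : (0 <= m)%R) by apply Cmod_ge_0.
  assert (Hd : (a - m <= Cmod (RtoC a + z))%R).
  { pose proof (Cmod_triangle (RtoC a + z) (- z)) as T.
    replace (RtoC a + z + - z) with (RtoC a) in T by ring.
    rewrite Cmod_opp, Cmod_R, Rabs_pos_eq in T by lra. fold m in T. lra. }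
  set (d := Cmod (RtoC a + z)) in *.
  assert (Hd2 : ((a + 1) / 2 <= d)%R) by (unfold a in *; lra).
  assert (Hnz : RtoC a + z <> 0) by (intros E; unfold d in Hd2; rewrite E, Cmod_0 in Hd2; lra).
  assert (Hanz : RtoC a <> 0) by (intros E; apply RtoC_inj in E; lra).
  rewrite Cmod_div, Cmod_mult, Cmod_R, Rabs_pos_eq by (lra || apply Cmult_neq_0; assumption).
  fold m d.
  replace (/ a - / (a + 1))%R with (/ (a * (a + 1)))%R by (field; lra).
  replace (4 * m * / (a * (a + 1)))%R with (m / (a * ((a + 1) / 4)))%R by (field; lra).
  apply Rmult_le_compat_l; [exact Hm|].
  apply Rinv_le_contravar; [apply Rmult_lt_0_compat; lra|].
  apply Rmult_le_compat_l; lra.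
Qed.

Lemma ex_series_Cmod_Hterm (z : C) : ex_series (fun j => Cmod (Hterm z j)).
Proof.
  destruct (INR_unbounded (2 * Cmod z)) as [n0 Hn0].
  apply (ex_series_incr_n _ n0).
  apply (@ex_series_le R_AbsRing R_CompleteNormedModule _
           (fun k => 4 * Cmod z / (INR (n0 + k) + 1) - 4 * Cmod z / (INR (n0 + S k) + 1))%R).
  - intros k. unfold norm; simpl. unfold abs; simpl.
    rewrite Rabs_pos_eq by apply Cmod_ge_0.
    replace (n0 + S k)%nat with (S (n0 + k)) by lia. unfold Rdiv.
    rewrite <- Rmult_minus_distr_l. apply Hterm_bound.
    rewrite plus_INR. pose proof (pos_INR k). lra.
  - eexists. apply (is_series_telescope (fun k => 4 * Cmod z / (INR (n0 + k) + 1))%R).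
    apply is_lim_seq_inv_INR.
Qed.

Lemma ex_series_Re_Hterm (z : C) : ex_series (fun j => Re (Hterm z j)).
Proof.
  apply (@ex_series_le R_AbsRing R_CompleteNormedModule _ _ (fun j => re_le_Cmod _)).
  apply ex_series_Cmod_Hterm.
Qed.

Lemma ex_series_Im_Hterm (z : C) : ex_series (fun j => Im (Hterm z j)).
Proof.
  apply (@ex_series_le R_AbsRing R_CompleteNormedModule _ (fun j => Cmod (Hterm z j)));
    [|apply ex_series_Cmod_Hterm].
  intros j. eapply Rle_trans; [apply Rmax_r | apply Rmax_Cmod].
Qed.

Lemma not_neg_int_shift_neq0 (z : C) j : not_neg_int z -> natC (S j) + z <> 0.
Proof.
  intros hz E. apply (hz j). rewrite RtoC_opp. fold (natC (S j)).
  rewrite <- (Cplus_0_l (- natC (S j))), <- E. ring.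
Qed.

(* [1 / (j + 1 + z) = 1 / (j + 1) - Hterm z j]: a null sequence minus the terms of a
   convergent series. *)
Lemma is_lim_seq_inv_shift (z : C) : not_neg_int z ->
  is_lim_seq (fun j => Re (/ (natC (S j) + z))) 0
  /\ is_lim_seq (fun j => Im (/ (natC (S j) + z))) 0.
Proof.
  intros hz.
  assert (Ht : forall j, / (natC (S j) + z) = RtoC (/ INR (S j)) - Hterm z j).
  { intros j. rewrite RtoC_inv by (apply not_0_INR; lia). unfold Hterm. fold (natC (S j)).
    field. split; [apply not_neg_int_shift_neq0, hz | apply natC_neq0; lia]. }
  split.
  - apply (is_lim_seq_ext (fun j => 1 / (INR (0 + j) + 1) - Re (Hterm z j))%R).
    + intros j. rewrite Ht. unfold Cminus.
      rewrite re_plus, re_opp, re_RtoC, S_INR. unfold Rdiv. rewrite Rmult_1_l. reflexivity.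
    + pose proof (is_lim_seq_minus' _ _ 0 0 (is_lim_seq_inv_INR 1 0)
                    (ex_series_lim_0 _ (ex_series_Re_Hterm z))) as L.
      rewrite Rminus_0_r in L. exact L.
  - apply (is_lim_seq_ext (fun j => 0 - Im (Hterm z j))%R).
    + intros j. rewrite Ht. unfold Cminus. rewrite im_plus, im_opp, im_RtoC. reflexivity.
    + pose proof (is_lim_seq_minus' _ _ 0 0 (is_lim_seq_const 0)
                    (ex_series_lim_0 _ (ex_series_Im_Hterm z))) as L.
      rewrite Rminus_0_r in L. exact L.
Qed.

(* [Hterm (z + 1) j = Hterm z j + t j - t (j + 1)] with [t j = 1 / (j + 1 + z)]. *)
Lemma HarmC_succ (z : C) : not_neg_int z -> HarmC (z + 1) = HarmC z + / (z + 1).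
Proof.
  intros hz.
  set (t j := / (natC (S j) + z)).
  assert (Hstep : forall j, Hterm (z + 1) j = Hterm z j + (t j - t (S j))).
  { intros j. unfold Hterm, t. fold (natC (S j)).
    pose proof (not_neg_int_shift_neq0 z j hz) as H1.
    pose proof (not_neg_int_shift_neq0 z (S j) hz) as H2. rewrite natC_S in H2.
    assert (H0 : natC (S j) <> 0) by (apply natC_neq0; lia).
    rewrite (natC_S (S j)).
    replace (natC (S j) + (z + 1)) with (natC (S j) + 1 + z) by ring.
    field. auto. }
  destruct (is_lim_seq_inv_shift z hz) as [Hre Him].
  unfold HarmC.
  rewrite (Series_ext _ (fun j => Re (Hterm z j) + (Re (t j) - Re (t (S j))))%R),
    (Series_ext (fun j => Im _) (fun j => Im (Hterm z j) + (Im (t j) - Im (t (S j))))%R),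
    !Series_plus_telescope
    by (apply ex_series_Re_Hterm || apply ex_series_Im_Hterm || assumption ||
        (intros; rewrite Hstep; unfold Cminus; rewrite ?re_plus, ?re_opp, ?im_plus, ?im_opp; ring)).
  replace (t O) with (/ (z + 1)) by (unfold t, natC; simpl; f_equal; ring).
  reflexivity.
Qed.

Section Transform.

Variable r : C.
Hypothesis Hr : forall j, r + natC j <> 0.

Lemma natC_add_neq0 j : natC j + r <> 0.
Proof. rewrite Cplus_comm. apply Hr. Qed.

Lemma binomKR_neq0 k : binomKR r k <> 0.
Proof.
  induction k as [|k IH]; [exact C1_nz|].
  apply Cmult_neq_0; [exact IH|].
  apply Cmult_neq_0; [apply Hr | apply Cinv_neq0, natC_neq0; lia].
Qed.

Local Ltac neq0 :=
  repeat split;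
  first [ assumption | apply Hr | apply natC_add_neq0 | apply binomKR_neq0
        | apply natC_neq0; lia | apply Cmult_neq_0; neq0 | rewrite <- natC_S; neq0 ].

Definition weight (N k : nat) : C :=
  RtoC ((-1) ^ (k - 1) * Binomial.C N k) / binomKR r k.

Lemma weight_1 N : (1 <= N)%nat -> (r + 1) * weight N 1 = natC N.
Proof.
  intros HN. unfold weight. change (binomKR r 1) with (1 * ((r + natC 1) / natC 1)).
  rewrite binomial_1 by exact HN. unfold natC. simpl. rewrite Rmult_1_l.
  field. exact (Hr 1).
Qed.

Lemma weight_S N k : (1 <= k)%nat -> (k < N)%nat ->
  (r + natC (S k)) * weight N (S k) = (natC k - natC N) * weight N k.
Proof.
  intros Hk HkN. unfold weight.
  change (binomKR r (S k)) with (binomKR r k * ((r + natC (S k)) / natC (S k))).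
  replace (S k - 1)%nat with (S (k - 1)) by lia.
  rewrite pascal_step3 by exact HkN. simpl pow.
  rewrite !RtoC_mult, RtoC_div by (apply not_0_INR; lia).
  fold (natC (N - k)) (natC (S k)). rewrite natC_sub by lia.
  field. neq0.
Qed.

Lemma weight_pascal N k : (1 <= k <= N)%nat ->
  weight (S N) k / natC k = weight N k / natC k + weight (S N) k / natC (S N).
Proof.
  intros Hk. unfold weight.
  rewrite (pascal_step2 N k) by lia.
  rewrite !RtoC_mult, RtoC_div by (apply not_0_INR; lia).
  fold (natC (S N - k)) (natC (S N)).
  assert (HSN : natC (S N) = natC (S N - k) + natC k) by (rewrite <- natC_add; f_equal; lia).
  assert (HSN0 : natC (S N - k) + natC k <> 0) by (rewrite <- HSN; apply natC_neq0; lia).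
  rewrite HSN. field. neq0.
Qed.

Definition wsum (a : nat -> C) (N : nat) : C := csum (fun k => weight N k * a k) N.

Lemma wsum_ext a b N :
  (forall k, (1 <= k <= N)%nat -> a k = b k) -> wsum a N = wsum b N.
Proof. intros H. apply csum_ext. intros k Hk. rewrite H by exact Hk. reflexivity. Qed.

Lemma wsum_plus a b N : wsum (fun k => a k + b k) N = wsum a N + wsum b N.
Proof. unfold wsum. rewrite <- csum_plus. apply csum_ext. intros. ring. Qed.

Lemma wsum_minus a b N : wsum (fun k => a k - b k) N = wsum a N - wsum b N.
Proof. unfold wsum. rewrite <- csum_minus. apply csum_ext. intros. ring. Qed.

Lemma wsum_scal c a N : wsum (fun k => c * a k) N = c * wsum a N.
Proof. unfold wsum. rewrite <- csum_scal. apply csum_ext. intros. ring. Qed.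

(* Summation by parts: by [weight_S], (k + 1 + r) w(k + 1) - (k + r) w(k) = -(N + r) w(k),
   and the boundary term at k = N carries the factor N - N. *)
Lemma wsum_abel_partial a N M : (1 <= M <= N)%nat ->
  (natC N + r) * csum (fun k => weight N k * a k) M
  - csum (fun k => weight N k * ((natC k + r) * (a k - a (k - 1)%nat))) M
  = (natC N - natC M) * weight N M * a M + natC N * a 0%nat.
Proof.
  induction M as [|M IH]; intros HM; [lia|].
  destruct (Nat.eq_dec M 0) as [->|HM0].
  - simpl. rewrite <- (weight_1 N) by lia. rewrite natC_S, natC_0. ring.
  - simpl csum. rewrite Nat.sub_0_r.
    assert (Hw : weight N (S M) = (natC M - natC N) * weight N M / (r + natC (S M)))
      by (rewrite <- weight_S by lia; field; neq0).
    rewrite Hw, natC_S.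
    replace (natC N * a 0%nat) with
      ((natC N + r) * csum (fun k => weight N k * a k) M
       - csum (fun k => weight N k * ((natC k + r) * (a k - a (k - 1)%nat))) M
       - (natC N - natC M) * weight N M * a M) by (rewrite IH by lia; ring).
    field. neq0.
Qed.

Lemma wsum_abel a N :
  (natC N + r) * wsum a N
  = wsum (fun k => (natC k + r) * (a k - a (k - 1)%nat)) N + natC N * a 0%nat.
Proof.
  unfold wsum. destruct N as [|N].
  - simpl. rewrite natC_0. ring.
  - pose proof (wsum_abel_partial a (S N) (S N) ltac:(lia)) as E.
    replace (natC (S N) - natC (S N)) with (RtoC 0) in E by ring.
    rewrite !Cmult_0_l, Cplus_0_l in E.
    rewrite <- E. ring.
Qed.

Lemma wsum_div_S b N :
  wsum (fun k => b k / natC k) (S N)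
  = wsum (fun k => b k / natC k) N + wsum b (S N) / natC (S N).
Proof.
  unfold wsum. simpl csum at 1 3.
  rewrite (csum_ext (fun k => weight (S N) k * (b k / natC k))
             (fun k => weight N k * (b k / natC k) + / natC (S N) * (weight (S N) k * b k))).
  - rewrite csum_plus, csum_scal. field. neq0.
  - intros k Hk.
    replace (weight (S N) k * (b k / natC k)) with (weight (S N) k / natC k * b k)
      by (field; neq0).
    rewrite weight_pascal by lia. field. neq0.
Qed.

Definition hdiff (m : nat) : C := csum (fun j => / (r + natC j)) m.

Definition wharm (N : nat) : C := (natC N / (natC N + r) + r * hdiff N) / (natC N + r).

Lemma wsum_one N : wsum (fun _ => 1) N = natC N / (natC N + r).
Proof.
  apply eq_div_of_mult; [apply natC_add_neq0|].
  rewrite wsum_abel, (wsum_ext _ (fun _ => 0 * 1)), wsum_scal by (intros; ring).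
  ring.
Qed.

Lemma wsum_inv N : wsum (fun k => 1 / natC k) N = hdiff N.
Proof.
  induction N as [|N IH]; [reflexivity|].
  rewrite (wsum_div_S (fun _ => 1)), IH, wsum_one. unfold hdiff. simpl csum. fold (hdiff N).
  field. neq0.
Qed.

Lemma wsum_harm N : wsum harmC N = wharm N.
Proof.
  apply eq_div_of_mult; [apply natC_add_neq0|].
  rewrite wsum_abel, (wsum_ext _ (fun k => 1 + r * (1 / natC k))).
  - rewrite wsum_plus, wsum_scal, wsum_one, wsum_inv, harmC_0. ring.
  - intros k Hk. rewrite harmC_pred by lia. field. neq0.
Qed.

Definition wharm_sum (N : nat) : C := csum (fun m => wharm m / natC m) N.
Definition hdiff_sum (N : nat) : C := csum (fun m => hdiff m / natC m) N.

Lemma wsum_harm_div N : wsum (fun k => harmC k / natC k) N = wharm_sum N.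
Proof.
  induction N as [|N IH]; [reflexivity|].
  rewrite wsum_div_S, IH, wsum_harm. reflexivity.
Qed.

Lemma wsum_inv_sq N : wsum (fun k => 1 / natC k / natC k) N = hdiff_sum N.
Proof.
  induction N as [|N IH]; [reflexivity|].
  rewrite (wsum_div_S (fun k => 1 / natC k)), IH, wsum_inv. reflexivity.
Qed.

Lemma wsum_harm_sq N :
  (natC N + r) * wsum (fun k => harmC k * harmC k) N
  = 2 * wharm N - hdiff N + r * (2 * wharm_sum N - hdiff_sum N).
Proof.
  rewrite wsum_abel, (wsum_ext _ (fun k => (2 * harmC k - 1 / natC k)
                        + r * (2 * (harmC k / natC k) - 1 / natC k / natC k))).
  - rewrite wsum_plus, wsum_minus, !wsum_scal, wsum_minus, wsum_scal.
    rewrite wsum_harm, wsum_inv, wsum_harm_div, wsum_inv_sq, harmC_0. ring.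
  - intros k Hk. rewrite harmC_pred by lia. field. neq0.
Qed.

Lemma not_neg_int_shift_pred m : not_neg_int (natC m + r - 1).
Proof.
  intros j E. apply (Hr (m + j)).
  replace (r + natC (m + j)) with ((natC m + r - 1) + natC (S j))
    by (rewrite natC_add, natC_S; ring).
  rewrite E, RtoC_opp. unfold natC. ring.
Qed.

Lemma HarmC_add_nat m : HarmC (natC m + r) = HarmC r + hdiff m.
Proof.
  induction m as [|m IH].
  - rewrite natC_0, Cplus_0_l. unfold hdiff. simpl. ring.
  - replace (natC (S m) + r) with ((natC m + r) + 1) by (rewrite natC_S; ring).
    rewrite HarmC_succ, IH.
    + unfold hdiff. simpl csum. rewrite natC_S.
      replace (natC m + r + 1) with (r + (natC m + 1)) by ring. ring.
    + replace (natC m + r) with (natC (S m) + r - 1) by (rewrite natC_S; ring).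
      apply not_neg_int_shift_pred.
Qed.

Definition hdiff_pred (p : nat) : C := hdiff p - / (r + natC p).

Lemma HarmC_add_nat_pred m : HarmC (natC m + r - 1) = HarmC r + hdiff_pred m.
Proof.
  pose proof (HarmC_succ _ (not_neg_int_shift_pred m)) as E.
  replace (natC m + r - 1 + 1) with (natC m + r) in E by ring.
  rewrite HarmC_add_nat in E.
  unfold hdiff_pred. rewrite (Cplus_comm r).
  transitivity (HarmC r + hdiff m - / (natC m + r)); [rewrite E|]; ring.
Qed.

Definition conv (g : nat -> C) (n : nat) : C :=
  csum (fun k => g (n - k)%nat / (natC k * (natC (n - k) + r))) n.

Lemma conv_partial_fractions g n :
  conv g n = (csum (fun k => g (n - k)%nat / natC k) n
              + csum (fun k => g (k - 1)%nat / (natC (k - 1) + r)) n) / (natC n + r).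
Proof.
  rewrite <- (csum_reflect (fun p => g p / (natC p + r))).
  unfold conv. rewrite (csum_ext _ (fun k => / (natC n + r)
                  * (g (n - k)%nat / natC k + g (n - k)%nat / (natC (n - k) + r)))).
  - rewrite csum_scal, csum_plus. field. neq0.
  - intros k Hk.
    assert (E : natC n = natC (n - k) + natC k) by (rewrite natC_sub by lia; ring).
    assert (Hnk : natC (n - k) + natC k + r <> 0) by (rewrite <- E; neq0).
    rewrite E. field. neq0.
Qed.

Lemma conv_affine c g n : conv (fun p => c + g p) n = c * conv (fun _ => 1) n + conv g n.
Proof. unfold conv. rewrite <- csum_scal, <- csum_plus. apply csum_ext. intros. unfold Cdiv. ring. Qed.

Lemma csum_inv_shift_pred n :
  csum (fun k => 1 / (natC (k - 1) + r)) n = / r + hdiff n - / (r + natC n).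
Proof.
  induction n as [|n IH].
  - unfold hdiff. simpl csum. rewrite natC_0. replace (r + 0) with r by ring. ring.
  - rewrite csum_S, IH, Nat.sub_succ, Nat.sub_0_r, (Cplus_comm (natC n)).
    unfold hdiff. rewrite csum_S. unfold Cdiv. ring.
Qed.

Lemma conv_one n :
  conv (fun _ => 1) n = (harmC n + / r + hdiff n - / (r + natC n)) / (natC n + r).
Proof.
  rewrite conv_partial_fractions. cbv beta.
  rewrite <- harmC_csum, csum_inv_shift_pred. f_equal. ring.
Qed.

Hypothesis Hr0 : r <> 0.

Lemma hdiff_pred_S p : hdiff_pred (S p) = hdiff p.
Proof. unfold hdiff_pred, hdiff. rewrite csum_S. ring. Qed.

Lemma csum_hdiff_pred_S n :
  csum (fun k => hdiff_pred (S n - k) / natC k) (S n)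
  = csum (fun k => hdiff_pred (n - k) / natC k) n + conv (fun _ => 1) n - / (r * natC (S n)).
Proof.
  rewrite csum_S, Nat.sub_diag.
  rewrite (csum_ext _ (fun k => hdiff_pred (n - k) / natC k
                                + 1 / (natC k * (natC (n - k) + r)))).
  - rewrite csum_plus. unfold conv, hdiff_pred, hdiff. simpl csum. rewrite natC_0, Cplus_0_r.
    field. neq0.
  - intros k Hk. replace (S n - k)%nat with (S (n - k)) by lia.
    rewrite hdiff_pred_S. unfold hdiff_pred. field. neq0.
Qed.

Lemma conv_hdiff_pred n :
  r * (natC n + r) * conv hdiff_pred n
  = r * harmC n * hdiff_pred n - natC n / (r * (natC n + r))
    - 2 * wharm n - r * (2 * wharm_sum n - hdiff_sum n).
Proof.
  rewrite conv_partial_fractions.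
  transitivity (r * (csum (fun k => hdiff_pred (n - k)%nat / natC k) n
                     + csum (fun k => hdiff_pred (k - 1)%nat / (natC (k - 1) + r)) n));
    [field; neq0|].
  revert n. apply eq_from_increments.
  - unfold wharm, wharm_sum, hdiff_sum, hdiff_pred, hdiff. simpl csum.
    rewrite natC_0, harmC_0, !Cplus_0_l, !Cplus_0_r. field. exact Hr0.
  - intros n. cbv beta.
    rewrite csum_hdiff_pred_S, conv_one, csum_S, Nat.sub_succ, Nat.sub_0_r.
    unfold wharm_sum, hdiff_sum. rewrite !csum_S.
    unfold wharm, hdiff_pred, hdiff. rewrite !csum_S, harmC_S, natC_S.
    field. neq0.
Qed.

Lemma wsum_harm_sq_closed n :
  wsum (fun k => harmC k * harmC k) n
  = 1 / (natC n + r) * ((HarmC (natC n + r) - HarmC r) * (r * HarmC r - 1))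
    + natC n / ((natC n + r) * (natC n + r)) * (HarmC r - 1 / r)
    + r / (natC n + r) * (harmC n * HarmC (natC n + r - 1))
    - r * conv (fun p => HarmC (natC p + r - 1)) n.
Proof.
  replace (conv (fun p => HarmC (natC p + r - 1)) n)
    with (conv (fun p => HarmC r + hdiff_pred p) n)
    by (apply csum_ext; intros; rewrite HarmC_add_nat_pred; reflexivity).
  rewrite HarmC_add_nat, HarmC_add_nat_pred, conv_affine, conv_one.
  rewrite (eq_div_of_mult _ _ _ (natC_add_neq0 n) (wsum_harm_sq n)).
  rewrite (eq_div_of_mult (r * (natC n + r)) _ _ ltac:(neq0) (conv_hdiff_pred n)).
  unfold wharm, hdiff_pred. field. neq0.
Qed.

Lemma wsum_binomKR a N :
  wsum a N = csum (fun k => RtoC ((-1) ^ (k - 1) * Binomial.C N k) * (a k / binomKR r k)) N.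
Proof. apply csum_ext. intros. unfold weight, Cdiv. ring. Qed.

End Transform.

Lemma shift_neq0_of_not_neg_int r :
  not_neg_int r -> r <> 0 -> forall j, r + natC j <> 0.
Proof.
  intros Hneg H0 [|j].
  - rewrite natC_0, Cplus_0_r. exact H0.
  - rewrite Cplus_comm. apply not_neg_int_shift_neq0, Hneg.
Qed.

Lemma shift_neq0_one j : 1 + natC j <> 0.
Proof. rewrite Cplus_comm, <- natC_S. apply natC_neq0. lia. Qed.

Lemma binomKR_one k : binomKR 1 k = natC k + 1.
Proof.
  induction k as [|k IH]; [cbn [binomKR]; rewrite natC_0; ring|].
  change (binomKR 1 (S k)) with (binomKR 1 k * ((1 + natC (S k)) / natC (S k))).
  rewrite IH, natC_S. field. rewrite <- natC_S. apply natC_neq0. lia.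
Qed.

Lemma hdiff_one n : hdiff 1 n = harmC n + / (natC n + 1) - 1.
Proof.
  induction n as [|n IH].
  - unfold hdiff. simpl csum. rewrite harmC_0, natC_0. field.
  - unfold hdiff in *. rewrite csum_S, IH, harmC_S, !natC_S. field.
    split; rewrite <- !natC_S; apply natC_neq0; lia.
Qed.

Definition harm2C (k : nat) : C := RtoC (Harm2 k).

Lemma harm2C_S k : harm2C (S k) = harm2C k + / (natC (S k) * natC (S k)).
Proof.
  unfold harm2C, natC. change (Harm2 (S k)) with (Harm2 k + / (INR (S k) ^ 2))%R.
  rewrite RtoC_plus, RtoC_inv, RtoC_pow by (apply pow_nonzero, not_0_INR; lia).
  simpl. rewrite Cmult_1_r. reflexivity.
Qed.

Lemma harm_sq_identity_one n :
  2 * (2 * wharm 1 n - hdiff 1 n + (2 * wharm_sum 1 n - hdiff_sum 1 n))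
  = 3 * harm2C n - harmC n * harmC n.
Proof.
  revert n. apply eq_from_increments.
  - unfold wharm, wharm_sum, hdiff_sum, hdiff, harm2C. simpl csum.
    rewrite natC_0, harmC_0. simpl Harm2. field.
  - intros n. unfold wharm_sum, hdiff_sum. rewrite !csum_S.
    unfold wharm. rewrite !hdiff_one, harmC_S, harm2C_S, !natC_S.
    field. repeat split; rewrite <- ?natC_S; apply natC_neq0; lia.
Qed.

Lemma wsum_harm_sq_one n :
  2 * (natC n + 1) * wsum 1 (fun k => harmC k * harmC k) n
  = 3 * harm2C n - harmC n * harmC n.
Proof.
  rewrite <- harm_sq_identity_one, <- (Cmult_1_l (2 * wharm_sum 1 n - hdiff_sum 1 n)).
  rewrite <- (wsum_harm_sq 1 shift_neq0_one). ring.
Qed.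

Local Open Scope R_scope.

Lemma alternating_harm_sq_sum_one n :
  sum_n_m (fun k => (-1) ^ (k - 1) * Binomial.C n k / (INR k + 1) * (Harm k) ^ 2) 1 n
  = / (2 * (INR n + 1)) * (3 * Harm2 n - (Harm n) ^ 2).
Proof.
  assert (HS : forall m, INR m + 1 <> 0) by (intros m; rewrite <- S_INR; apply not_0_INR; lia).
  assert (Hn : (2 * (natC n + 1))%C <> 0%C).
  { apply Cmult_neq_0; [|rewrite <- natC_S; apply natC_neq0; lia].
    intros E. apply RtoC_inj in E. lra. }
  apply RtoC_inj. rewrite sum_n_m_RtoC.
  transitivity (wsum 1 (fun k => harmC k * harmC k)%C n).
  { apply csum_ext. intros k Hk. unfold weight, harmC. rewrite binomKR_one. unfold natC.
    rewrite <- RtoC_plus, <- RtoC_mult, <- RtoC_div, <- RtoC_mult by apply HS.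
    f_equal. ring. }
  rewrite (eq_div_of_mult _ _ _ Hn (wsum_harm_sq_one n)).
  replace (Harm n ^ 2) with (Harm n * Harm n) by ring.
  rewrite RtoC_mult, RtoC_inv, RtoC_minus, !RtoC_mult, RtoC_plus
    by (apply Rmult_integral_contrapositive; split; [lra | apply HS]).
  fold (natC n) (harmC n) (harm2C n). unfold Cdiv. ring.
Qed.

Theorem corollary12 :
  (forall (n : nat) (r : C), not_neg_int r -> r <> RtoC 0 ->
     let N := RtoC (INR n) in
     sum_n_m (fun k => Cmult (RtoC ((-1) ^ (k - 1) * Binomial.C n k))
                        (Cdiv (Cmult (RtoC (Harm k)) (RtoC (Harm k))) (binomKR r k))) 1 n
     = Cplus (Cplus (Cplus
         (Cmult (Cdiv (RtoC 1) (Cplus N r))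
                (Cmult (Cminus (HarmC (Cplus N r)) (HarmC r))
                       (Cminus (Cmult r (HarmC r)) (RtoC 1))))
         (Cmult (Cdiv N (Cmult (Cplus N r) (Cplus N r)))
                (Cminus (HarmC r) (Cdiv (RtoC 1) r))))
         (Cmult (Cdiv r (Cplus N r))
                (Cmult (RtoC (Harm n)) (HarmC (Cminus (Cplus N r) (RtoC 1))))))
       (Copp (Cmult r
         (sum_n_m (fun k =>
            Cdiv (HarmC (Cminus (Cplus (RtoC (INR (n - k))) r) (RtoC 1)))
                 (Cmult (RtoC (INR k)) (Cplus (RtoC (INR (n - k))) r))) 1 n))))
  /\
  (forall n : nat,
     sum_n_m (fun k => (-1) ^ (k - 1) * Binomial.C n k / (INR k + 1) * (Harm k) ^ 2) 1 n
     = / (2 * (INR n + 1)) * (3 * Harm2 n - (Harm n) ^ 2)).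
Proof.
  split; [|exact alternating_harm_sq_sum_one].
  intros n r Hneg H0 N.
  pose proof (shift_neq0_of_not_neg_int r Hneg H0) as Hr.
  rewrite !sum_n_m_csum.
  transitivity (wsum r (fun k => harmC k * harmC k)%C n); [symmetry; apply wsum_binomKR|].
  rewrite wsum_harm_sq_closed by assumption. reflexivity.
Qed.
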